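(* Let $\mathbb X,\mathbb Y$ be Euclidean spaces, $\varphi\colon\mathbb X\to\mathbb R$ locally Lipschitz, $\Phi\colon\mathbb X\rightrightarrows\mathbb Y$ with closed graph, $\bar y\in\operatorname{Im}\Phi$, and let $\bar x$ be a local minimizer of (P): $\min\{\varphi(x)\mid\bar y\in\Phi(x)\}$ such that, for each critical direction $u\in\mathbb S_{\mathbb X}$ for (P) at $\bar x$, $\Phi$ is asymptotically regular at $(\bar x,\bar y)$ in direction $u$. Then $\bar x$ is M-stationary, i.e., $0\in\partial\varphi(\bar x)+D^*\Phi(\bar x,\bar y)(\lambda)$ for some $\lambda\in\mathbb Y$.
   Context: $\partial$ is the limiting subdifferential; $D^*\Phi(x,y)(y^* )=\{x^*\mid(x^*,-y^* )\in\mathcal N_{\operatorname{gph}\Phi}(x,y)\}$ (limiting coderivative), $\widehat D^*$ the same with the regular normal cone. $u$ is a critical direction for (P) at $\bar x$ if there are $u_k\to u$, $\alpha_k\to0$, $v_k\to0$, $t_k\downarrow0$ with $\varphi(\bar x+t_ku_k)\le\varphi(\bar x)+t_k\|u_k\|\alpha_k$ and $\bar y+t_k\|u_k\|v_k\in\Phi(\bar x+t_ku_k)$. $\Phi$ is asymptotically regular at $(\bar x,\bar y)$ in direction $u\in\mathbb S_{\mathbb X}$ if for all sequences $(x_k,y_k)\in\operatorname{gph}\Phi$, $x_k^*$, $\lambda_k$ and $x^*$, $y^*$ with $x_k\notin\Phi^{-1}(\bar y)$, $y_k\ne\bar y$, $x_k^*\in\widehat D^*\Phi(x_k,y_k)(\lambda_k)$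 for all $k$ and $x_k\to\bar x$, $y_k\to\bar y$, $x_k^*\to x^*$, $\frac{x_k-\bar x}{\|x_k-\bar x\|}\to u$, $\frac{y_k-\bar y}{\|x_k-\bar x\|}\to0$, $\frac{\|y_k-\bar y\|}{\|x_k-\bar x\|}\lambda_k\to y^*$, $\|\lambda_k\|\to\infty$, $\frac{y_k-\bar y}{\|y_k-\bar y\|}-\frac{\lambda_k}{\|\lambda_k\|}\to0$, one has $x^*\in\operatorname{Im}D^*\Phi(\bar x,\bar y)=\bigcup_{\lambda}D^*\Phi(\bar x,\bar y)(\lambda)$. *)

(* X = 'rV[R]_n, Y = 'rV[R]_m with the
   Euclidean inner product and Euclidean norm. *)
From HB Require Import structures.
From mathcomp Require Import all_boot all_order all_algebra.
From mathcomp Require Import all_classical all_reals all_analysis.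
Set Implicit Arguments. Unset Strict Implicit. Unset Printing Implicit Defensive.
Import Order.TTheory GRing.Theory Num.Theory.
Import numFieldNormedType.Exports.
Local Open Scope classical_set_scope.
Local Open Scope ring_scope.

Section EuclDefs.
Variable R : realType.

Definition edot {n : nat} (u v : 'rV[R]_n) : R := (u *m v^T) 0 0.
Definition enorm {n : nat} (u : 'rV[R]_n) : R := Num.sqrt (edot u u).
Definition pnorm {n m : nat} (a : 'rV[R]_n) (b : 'rV[R]_m) : R :=
  Num.sqrt (edot a a + edot b b).

(* set-valued map Phi : X => Y, given by its graph relation (Phi x y <-> y \in Phi(x)) *)
Definition gph {n m : nat} (Phi : 'rV[R]_n -> 'rV[R]_m -> Prop)
  : set ('rV[R]_n * 'rV[R]_m) := [set p | Phi p.1 p.2].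

Definition closed_graph {n m : nat} (Phi : 'rV[R]_n -> 'rV[R]_m -> Prop) : Prop :=
  closed (gph Phi).

Definition locally_lipschitz {n : nat} (phi : 'rV[R]_n -> R) : Prop :=
  forall x, exists L : R, exists2 d : R, 0 < d &
    forall y z, enorm (y - x) < d -> enorm (z - x) < d ->
      `|phi y - phi z| <= L * enorm (y - z).

Definition reg_normal_gph {n m : nat} (Phi : 'rV[R]_n -> 'rV[R]_m -> Prop)
  (x : 'rV[R]_n) (y : 'rV[R]_m) (xs : 'rV[R]_n) (ys : 'rV[R]_m) : Prop :=
  Phi x y /\
  forall e : R, 0 < e -> exists2 d : R, 0 < d &
    forall x' y', Phi x' y' -> pnorm (x' - x) (y' - y) < d ->
      edot xs (x' - x) + edot ys (y' - y) <= e * pnorm (x' - x) (y' - y).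

Definition lim_normal_gph {n m : nat} (Phi : 'rV[R]_n -> 'rV[R]_m -> Prop)
  (x : 'rV[R]_n) (y : 'rV[R]_m) (xs : 'rV[R]_n) (ys : 'rV[R]_m) : Prop :=
  exists (xk : nat -> 'rV[R]_n) (yk : nat -> 'rV[R]_m)
         (xsk : nat -> 'rV[R]_n) (ysk : nat -> 'rV[R]_m),
    [/\ xk @ \oo --> x, yk @ \oo --> y, xsk @ \oo --> xs, ysk @ \oo --> ys &
        forall k, reg_normal_gph Phi (xk k) (yk k) (xsk k) (ysk k)].

(* regular coderivative: xs \in \hat D^* Phi(x,y)(ys) *)
Definition reg_coderiv {n m : nat} (Phi : 'rV[R]_n -> 'rV[R]_m -> Prop)
  (x : 'rV[R]_n) (y : 'rV[R]_m) (ys : 'rV[R]_m) (xs : 'rV[R]_n) : Prop :=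
  reg_normal_gph Phi x y xs (- ys).

(* limiting coderivative: xs \in D^* Phi(x,y)(ys) *)
Definition lim_coderiv {n m : nat} (Phi : 'rV[R]_n -> 'rV[R]_m -> Prop)
  (x : 'rV[R]_n) (y : 'rV[R]_m) (ys : 'rV[R]_m) (xs : 'rV[R]_n) : Prop :=
  lim_normal_gph Phi x y xs (- ys).

Definition reg_subdiff {n : nat} (phi : 'rV[R]_n -> R) (x v : 'rV[R]_n) : Prop :=
  forall e : R, 0 < e -> exists2 d : R, 0 < d &
    forall x', enorm (x' - x) < d ->
      phi x' - phi x - edot v (x' - x) >= - (e * enorm (x' - x)).

Definition lim_subdiff {n : nat} (phi : 'rV[R]_n -> R) (x v : 'rV[R]_n) : Prop :=
  exists (xk vk : nat -> 'rV[R]_n),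
    [/\ xk @ \oo --> x, (fun k => phi (xk k)) @ \oo --> phi x,
        vk @ \oo --> v & forall k, reg_subdiff phi (xk k) (vk k)].

Definition local_min_P {n m : nat} (phi : 'rV[R]_n -> R)
  (Phi : 'rV[R]_n -> 'rV[R]_m -> Prop) (ybar : 'rV[R]_m) (xbar : 'rV[R]_n) : Prop :=
  Phi xbar ybar /\ exists2 d : R, 0 < d &
    forall x, Phi x ybar -> enorm (x - xbar) < d -> phi xbar <= phi x.

Definition critical_direction {n m : nat} (phi : 'rV[R]_n -> R)
  (Phi : 'rV[R]_n -> 'rV[R]_m -> Prop) (xbar : 'rV[R]_n) (ybar : 'rV[R]_m)
  (u : 'rV[R]_n) : Prop :=
  exists (uk : nat -> 'rV[R]_n) (ak : nat -> R) (vk : nat -> 'rV[R]_m) (tk : nat -> R),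
    [/\ uk @ \oo --> u, ak @ \oo --> 0, vk @ \oo --> (0 : 'rV[R]_m) &
        (tk @ \oo --> 0 /\ forall k, 0 < tk k)] /\
    (forall k, phi (xbar + tk k *: uk k)
                   <= phi xbar + tk k * enorm (uk k) * ak k) /\
    (forall k, Phi (xbar + tk k *: uk k) (ybar + (tk k * enorm (uk k)) *: vk k)).

Definition asymp_regular {n m : nat} (Phi : 'rV[R]_n -> 'rV[R]_m -> Prop)
  (xbar : 'rV[R]_n) (ybar : 'rV[R]_m) (u : 'rV[R]_n) : Prop :=
  forall (xk : nat -> 'rV[R]_n) (yk : nat -> 'rV[R]_m) (xsk : nat -> 'rV[R]_n)
         (lk : nat -> 'rV[R]_m) (xs : 'rV[R]_n) (ys : 'rV[R]_m),
    (forall k, Phi (xk k) (yk k)) ->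
    (forall k, ~ Phi (xk k) ybar) ->
    (forall k, yk k <> ybar) ->
    (forall k, reg_coderiv Phi (xk k) (yk k) (lk k) (xsk k)) ->
    xk @ \oo --> xbar ->
    yk @ \oo --> ybar ->
    xsk @ \oo --> xs ->
    (fun k => (enorm (xk k - xbar))^-1 *: (xk k - xbar)) @ \oo --> u ->
    (fun k => (enorm (xk k - xbar))^-1 *: (yk k - ybar)) @ \oo --> (0 : 'rV[R]_m) ->
    (fun k => (enorm (yk k - ybar) / enorm (xk k - xbar)) *: lk k) @ \oo --> ys ->
    (fun k => enorm (lk k)) @ \oo --> +oo ->
    (fun k => (enorm (yk k - ybar))^-1 *: (yk k - ybar)
              - (enorm (lk k))^-1 *: lk k) @ \oo --> (0 : 'rV[R]_m) ->
    exists lam : 'rV[R]_m, lim_coderiv Phi xbar ybar lam xs.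

End EuclDefs.

(* Penalty method.  For c_k = k + 1 let (x_k, z_k, y_k) minimize
     phi z + c_k |x - z|^2 + c_k |y - ybar|^2 + |z - xbar|^2
   over (x, y) in gph Phi with x, z, y eps-close to xbar, xbar, ybar.  Comparing with
   (xbar, xbar, ybar) and using the local optimality of xbar gives x_k, z_k -> xbar and
   y_k -> ybar along a subsequence.  Optimality in z makes
   xi_k = 2 c_k (x_k - z_k) - 2 (z_k - xbar) a regular subgradient of phi at z_k; optimality
   in (x, y) makes -2 c_k (x_k - z_k) = - xi_k - 2 (z_k - xbar) a regular coderivative element
   of Phi at (x_k, y_k) for lam_k = 2 c_k (y_k - ybar).  If lam_k is bounded along a
   subsequence, the limit is an M-stationarity multiplier.  Otherwise c_k |x_k - xbar| -> oo,
   so phi x_k <= phi xbar + O(1/c_k) and y_k - ybar = o(|x_k - xbar|): the limit u of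
   (x_k - xbar) / |x_k - xbar| is a critical direction, and asymptotic regularity in the
   direction u yields the multiplier. *)

From HB Require Import structures.
From mathcomp Require Import all_boot all_order all_algebra.
From mathcomp Require Import all_classical all_reals all_analysis.
From mathcomp Require Import ring lra.
Import Order.TTheory GRing.Theory Num.Theory.
Import numFieldNormedType.Exports.
Set Implicit Arguments. Unset Strict Implicit. Unset Printing Implicit Defensive.
Local Open Scope classical_set_scope.
Local Open Scope ring_scope.

Section euclidean.
Variable R : realType.

Section inner_product.
Variable n : nat.
Implicit Types u v w : 'rV[R]_n.

Lemma edotE u v : edot u v = \sum_i u 0 i * v 0 i.
Proof. by rewrite /edot mxE; apply: eq_bigr => i _; rewrite mxE. Qed.

Lemma edotC u v : edot u v = edot v u.
Proof. by rewrite !edotE; apply: eq_bigr => i _; rewrite mulrC. Qed.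

Lemma edotDl u v w : edot (u + v) w = edot u w + edot v w.
Proof. by rewrite !edotE -big_split; apply: eq_bigr => i _; rewrite mxE mulrDl. Qed.

Lemma edotZl a u w : edot (a *: u) w = a * edot u w.
Proof. by rewrite !edotE mulr_sumr; apply: eq_bigr => i _; rewrite mxE mulrA. Qed.

Lemma edotZr a u w : edot w (a *: u) = a * edot w u.
Proof. by rewrite edotC edotZl edotC. Qed.

Lemma edotNl u w : edot (- u) w = - edot u w.
Proof. by rewrite -scaleN1r edotZl mulN1r. Qed.

Lemma edotBl u v w : edot (u - v) w = edot u w - edot v w.
Proof. by rewrite edotDl edotNl. Qed.

Lemma edotDr u v w : edot w (u + v) = edot w u + edot w v.
Proof. by rewrite edotC edotDl !(edotC w). Qed.

Lemma edotBr u v w : edot w (u - v) = edot w u - edot w v.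
Proof. by rewrite edotC edotBl !(edotC w). Qed.

Lemma edot0l w : edot 0 w = 0.
Proof. by rewrite -(scale0r 0) edotZl mul0r. Qed.

Lemma edot_ge0 u : 0 <= edot u u.
Proof. by rewrite edotE sumr_ge0 // => i _; rewrite -expr2 sqr_ge0. Qed.

Lemma edot_eq0 u : edot u u = 0 -> u = 0.
Proof.
rewrite edotE => /eqP; rewrite psumr_eq0 => [/allP u0|i _]; last by rewrite -expr2 sqr_ge0.
apply/rowP => i; rewrite mxE; have /(_ (mem_index_enum i)) := u0 i.
by rewrite -expr2 sqrf_eq0 => /eqP.
Qed.

Lemma edot_sqrB u v : edot (u - v) (u - v) = edot u u - 2 * edot u v + edot v v.
Proof. rewrite !edotBl !edotBr (edotC v u); ring. Qed.

Lemma edot_sqrD u v : edot (u + v) (u + v) = edot u u + 2 * edot u v + edot v v.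
Proof. rewrite !edotDl !edotDr (edotC v u); ring. Qed.

Lemma cauchy_schwarz u v : edot u v ^+ 2 <= edot u u * edot v v.
Proof.
have [v0|vN0] := eqVneq (edot v v) 0.
  by rewrite (edot_eq0 v0) edotC edot0l expr0n /= edot0l mulr0.
have v_gt0 : 0 < edot v v by rewrite lt_neqAle eq_sym vN0 edot_ge0.
pose k := edot u v / edot v v.
have := edot_ge0 (u - k *: v); rewrite edot_sqrB edotZl !edotZr.
have -> : edot u u - 2 * (k * edot u v) + k * (k * edot v v)
    = (edot u u * edot v v - edot u v ^+ 2) / edot v v by rewrite /k; field; exact: vN0.
by rewrite pmulr_lge0 ?invr_gt0 // subr_ge0.
Qed.

Lemma enorm_ge0 u : 0 <= enorm u.
Proof. exact: sqrtr_ge0. Qed.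

Lemma enorm_sqr u : enorm u ^+ 2 = edot u u.
Proof. by rewrite sqr_sqrtr // edot_ge0. Qed.

Lemma enorm0 : enorm (0 : 'rV[R]_n) = 0.
Proof. by rewrite /enorm edot0l sqrtr0. Qed.

Lemma enormZ a u : enorm (a *: u) = `|a| * enorm u.
Proof.
by rewrite /enorm edotZl edotZr mulrA -expr2 sqrtrM ?sqr_ge0 // sqrtr_sqr.
Qed.

Lemma enormN u : enorm (- u) = enorm u.
Proof. by rewrite -scaleN1r enormZ normrN1 mul1r. Qed.

Lemma enormBC u v : enorm (u - v) = enorm (v - u).
Proof. by rewrite -enormN opprB. Qed.

Lemma edot_le_enorm u v : edot u v <= enorm u * enorm v.
Proof.
have [uv_le0|uv_gt0] := lerP (edot u v) 0.
  by rewrite (le_trans uv_le0) ?mulr_ge0 ?enorm_ge0.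
by rewrite -ler_sqr ?nnegrE ?(ltW uv_gt0) ?mulr_ge0 ?enorm_ge0 // exprMn !enorm_sqr cauchy_schwarz.
Qed.

Lemma enormD u v : enorm (u + v) <= enorm u + enorm v.
Proof.
rewrite -ler_sqr ?nnegrE ?addr_ge0 ?enorm_ge0 // enorm_sqr edot_sqrD sqrrD !enorm_sqr.
by have := edot_le_enorm u v; lra.
Qed.

Lemma enorm_distD u v w : enorm (u - w) <= enorm (u - v) + enorm (v - w).
Proof. by rewrite -[u - w](subrKA v) enormD. Qed.

Lemma ler_enorm_dist u v : `|enorm u - enorm v| <= enorm (u - v).
Proof.
have := enorm_distD u v 0; have := enorm_distD v u 0.
by rewrite !subr0 (enormBC v u) ler_norml; lra.
Qed.

Lemma mx_norm_le_enorm u : `|u| <= enorm u.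
Proof.
rewrite [leLHS]/Num.Def.normr /= mx_normrE.
apply: bigmax_le => [|[i j] _ /=]; first exact: enorm_ge0.
rewrite (ord1 i) -ler_sqr ?nnegrE ?enorm_ge0 // enorm_sqr edotE real_normK ?num_real //.
by rewrite (bigD1 j) //= expr2 lerDl sumr_ge0 // => k _; rewrite -expr2 sqr_ge0.
Qed.

Lemma enorm_le_mx_norm u : enorm u <= Num.sqrt n%:R * `|u|.
Proof.
rewrite /enorm -(ger0_norm (normr_ge0 u)) -sqrtr_sqr -sqrtrM ?ler0n //.
rewrite ler_sqrt ?mulr_ge0 ?sqr_ge0 // edotE.
have -> : n%:R * `|u| ^+ 2 = \sum_(i < n) `|u| ^+ 2 by rewrite sumr_const card_ord mulr_natl.
apply: ler_sum => i _; rewrite -expr2 -real_normK ?num_real // ler_sqr ?nnegrE //.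
rewrite [leRHS]/Num.Def.normr /= mx_normrE; exact: (le_bigmax _ _ (0, i)).
Qed.

End inner_product.

Section product_norm.
Variables n m : nat.
Implicit Types (a : 'rV[R]_n) (b : 'rV[R]_m).

Lemma pnorm_sqr a b : pnorm a b ^+ 2 = edot a a + edot b b.
Proof. by rewrite sqr_sqrtr // addr_ge0 ?edot_ge0. Qed.

Lemma pnorm_ge0 a b : 0 <= pnorm a b.
Proof. exact: sqrtr_ge0. Qed.

Lemma enorm_le_pnorml a b : enorm a <= pnorm a b.
Proof. by rewrite ler_sqrt ?addr_ge0 ?edot_ge0 // lerDl edot_ge0. Qed.

Lemma enorm_le_pnormr a b : enorm b <= pnorm a b.
Proof. by rewrite ler_sqrt ?addr_ge0 ?edot_ge0 // lerDr edot_ge0. Qed.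

End product_norm.
End euclidean.

Lemma cvg_infty_ge (f : nat -> nat) : (forall j, (j <= f j)%N) -> f @ \oo --> \oo.
Proof. by move=> f_ge P [N _ NP]; exists N => // j /= /leq_trans/(_ (f_ge j)) /NP. Qed.

Lemma near_comp (f : nat -> nat) (P : nat -> Prop) : f @ \oo --> \oo ->
  (\forall k \near \oo, P k) -> \forall j \near \oo, P (f j).
Proof. by move=> f_oo; exact: f_oo. Qed.

Section enorm_convergence.
Variables (R : realType) (p : nat).
Implicit Types (z : nat -> 'rV[R]_p) (c : 'rV[R]_p).

Lemma cvg_enormP z c : z @ \oo --> c <-> (fun k => enorm (z k - c)) @ \oo --> 0.
Proof.
rewrite !cvgrPdist_lt; split=> zc e e0.
- have K_gt0 : 0 < Num.sqrt (p%:R : R) + 1 by rewrite ltr_wpDl ?sqrtr_ge0.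
  near=> k; rewrite sub0r normrN ger0_norm ?enorm_ge0 //.
  apply: le_lt_trans (enorm_le_mx_norm _) _.
  apply: le_lt_trans (_ : _ <= (Num.sqrt p%:R + 1) * `|c - z k|) _.
    by rewrite distrC ler_wpM2r // lerDl.
  rewrite mulrC -ltr_pdivlMr //; near: k; exact/zc/divr_gt0.
- near=> k; rewrite (le_lt_trans (mx_norm_le_enorm _)) // enormBC.
  have : `|0 - enorm (z k - c)| < e by near: k; exact: zc.
  by rewrite sub0r normrN ger0_norm ?enorm_ge0.
Unshelve. all: by end_near.
Qed.

Lemma cvg_enorm z c : z @ \oo --> c -> (fun k => enorm (z k)) @ \oo --> enorm c.
Proof.
move=> /cvg_enormP /cvgrPdist_lt zc; apply/cvgrPdist_lt => e e0.
near=> k; rewrite (le_lt_trans (ler_enorm_dist _ _)) // enormBC.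
have : `|0 - enorm (z k - c)| < e by near: k; exact: zc.
by rewrite sub0r normrN ger0_norm ?enorm_ge0.
Unshelve. all: by end_near.
Qed.

Lemma cvg_enorm_lt z c (r : R) : z @ \oo --> c -> 0 < r ->
  \forall k \near \oo, enorm (z k - c) < r.
Proof. by move=> /cvg_enormP zc r_gt0; exact: (cvgr_lt _ zc). Qed.

Lemma cvg_enorm_le z c (g : nat -> R) : g @ \oo --> 0 ->
  (\forall k \near \oo, enorm (z k - c) <= g k) -> z @ \oo --> c.
Proof.
move=> g0 zg; apply/cvg_enormP; apply: (squeeze_cvgr _ (cvg_cst 0) g0).
by apply: filterS zg => k ->; rewrite enorm_ge0.
Qed.

Lemma cvg_edot_sqr z c : z @ \oo --> c -> (fun k => edot (z k) (z k)) @ \oo --> edot c c.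
Proof.
move=> /cvg_enorm zc; rewrite -enorm_sqr.
by under eq_fun do rewrite -enorm_sqr expr2; rewrite expr2; exact: cvgM.
Qed.

Lemma cvg_enorm_bound z c c0 (r : R) :
  (\forall k \near \oo, enorm (z k - c0) <= r) -> z @ \oo --> c -> enorm (c - c0) <= r.
Proof.
move=> zr zc; apply: (closed_cvg [set x | x <= r] (@closed_le _ _) zr).
exact/cvg_enorm/(cvgB zc (cvg_cst c0)).
Qed.

Lemma cvg_enorm_near_eq z c (r : R) :
  (\forall k \near \oo, enorm (z k) = r) -> z @ \oo --> c -> enorm c = r.
Proof.
move=> zr /cvg_enorm zc; apply/eqP; rewrite eq_le.
rewrite (closed_cvg [set x | x <= r] (@closed_le _ _) _ _ zc); last first.
  by apply: filterS zr => k ->; rewrite /= lexx.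
rewrite (closed_cvg [set x | r <= x] (@closed_ge _ _) _ _ zc) //.
by apply: filterS zr => k ->; rewrite /= lexx.
Qed.

Lemma bounded_subseq_cvg z (M : R) : (\forall k \near \oo, enorm (z k) <= M) ->
  exists2 f : nat -> nat, f @ \oo --> \oo & exists c, z \o f @ \oo --> c.
Proof.
move=> zM; pose A := [set v : 'rV[R]_p | `|v| <= M].
have A_compact : compact A.
  apply: bounded_closed_compact.
    by exists M; split; [exact: num_real | move=> r Mr v /le_trans; apply; exact: ltW].
  apply: (@preimage_closed _ _ (fun v : 'rV[R]_p => `|v|) [set r | r <= M]) => [x _|].
    exact: norm_continuous.
  exact: closed_le.
have zA : (z @ \oo) A by apply: filterS zM => k /(le_trans (mx_norm_le_enorm _)).
have [c [_ c_cluster]] := A_compact _ _ zA.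
have /choice [f f_spec] : forall j, exists k, (j <= k)%N /\ `|c - z k| < j.+1%:R^-1.
  move=> j; have zj : (z @ \oo) (z @` [set k | (j <= k)%N]).
    by exists j => // k jk; exists k.
  have ball_c : nbhs c (ball c (j.+1%:R^-1 : R)) by apply: nbhsx_ballx; rewrite invr_gt0.
  have [_ [[k jk <-] zk_c]] := c_cluster _ _ zj ball_c.
  by exists k; rewrite -ball_normE in zk_c.
exists f; first by apply: cvg_infty_ge => j; case: (f_spec j).
exists c; apply/cvgrPdist_lt => e e0; near=> j; apply: lt_trans (f_spec j).2 _.
by near: j; exact: (near_infty_natSinv_lt (PosNum e0)).
Unshelve. all: by end_near.
Qed.

End enorm_convergence.

Lemma cvg0_sqr_le (R : realType) (f g : nat -> R) : g @ \oo --> 0 ->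
  (\forall k \near \oo, 0 <= f k /\ f k ^+ 2 <= g k) -> f @ \oo --> 0.
Proof.
move=> /cvgrPdist_lt g0 fg; apply/cvgrPdist_lt => e e0.
have e2_gt0 : 0 < e ^+ 2 by rewrite exprn_gt0.
near=> k; have [f_ge0 fk_le] : 0 <= f k /\ f k ^+ 2 <= g k by near: k.
have : `|0 - g k| < e ^+ 2 by near: k; exact: g0.
rewrite !sub0r !normrN (ger0_norm f_ge0) => gk_lt.
rewrite -ltr_sqr ?nnegrE ?(ltW e0) //; exact: le_lt_trans (le_trans fk_le (ler_norm _)) gk_lt.
Unshelve. all: by end_near.
Qed.

Lemma closed_graph_cvg (R : realType) (n m : nat) (Phi : 'rV[R]_n -> 'rV[R]_m -> Prop)
    (xk : nat -> 'rV[R]_n) (yk : nat -> 'rV[R]_m) x y :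
  closed_graph Phi -> (forall k, Phi (xk k) (yk k)) ->
  xk @ \oo --> x -> yk @ \oo --> y -> Phi x y.
Proof.
move=> Phi_closed Phi_k xk_x yk_y.
have gph_k : \forall k \near \oo, gph Phi (xk k, yk k) by exact: nearW.
exact: (closed_cvg _ Phi_closed gph_k (x, y) (cvg_pair xk_x yk_y)).
Qed.

Lemma cvgy_or_bounded_subseq (R : realType) (u : nat -> R) : u @ \oo --> +oo \/
  exists2 f : nat -> nat, f @ \oo --> \oo & exists M, forall j, u (f j) <= M.
Proof.
have [[M uM]|] := pselect (exists M, forall N, exists k, (N <= k)%N /\ u k <= M).
  have [f f_spec] := choice uM; right; exists f; last by exists M => j; case: (f_spec j).
  by apply: cvg_infty_ge => j; case: (f_spec j).
move=> /forallNP u_big; left; apply/cvgryPgt => M.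
have [N uN] : exists N, forall k, (N <= k)%N -> M < u k.
  apply: contrapT => /forallNP uN; apply: (u_big M) => N; have /existsNP[k] := uN N.
  by move=> /not_implyP[Nk] /negP; rewrite -leNgt => ?; exists k.
by exists N => // k /uN.
Qed.

Lemma exists_minimizer (R : realType) (p q r : nat)
    (K : 'rV[R]_p -> 'rV[R]_q -> 'rV[R]_r -> Prop) (G : 'rV[R]_p -> 'rV[R]_q -> 'rV[R]_r -> R)
    (B lb : R) a0 b0 c0 :
  K a0 b0 c0 ->
  (forall a b c, K a b c -> [/\ enorm a <= B, enorm b <= B & enorm c <= B]) ->
  (forall a b c, K a b c -> lb <= G a b c) ->
  (forall za zb zc a b c, (forall k, K (za k) (zb k) (zc k)) ->
     za @ \oo --> a -> zb @ \oo --> b -> zc @ \oo --> c ->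
     K a b c /\ (fun k => G (za k) (zb k) (zc k)) @ \oo --> G a b c) ->
  exists a b c, K a b c /\ forall a' b' c', K a' b' c' -> G a b c <= G a' b' c'.
Proof.
move=> K0 K_bounded G_ge K_closed.
pose S := [set x | exists a b c, K a b c /\ x = G a b c].
have S_inf : has_inf S.
  by split; [exists (G a0 b0 c0), a0, b0, c0 | exists lb => _ [a [b [c [Kabc ->]]]]; exact: G_ge].
have /choice [t t_spec] : forall j, exists t : 'rV[R]_p * 'rV[R]_q * 'rV[R]_r,
    K t.1.1 t.1.2 t.2 /\ G t.1.1 t.1.2 t.2 < inf S + j.+1%:R^-1.
  move=> j; have j_gt0 : 0 < (j.+1%:R : R)^-1 by rewrite invr_gt0.
  have [_ [a [b [c [Kabc ->]]]] Gabc] := inf_adherent j_gt0 S_inf.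
  by exists (a, b, c).
have K_t j := (t_spec j).1.
have [f1 f1_oo [a ta]] : exists2 f1 : nat -> nat, f1 @ \oo --> \oo &
    exists a : 'rV[R]_p, (fun j => (t j).1.1) \o f1 @ \oo --> a.
  by apply: (@bounded_subseq_cvg _ _ _ B); apply: nearW => j; case: (K_bounded _ _ _ (K_t j)).
have [f2 f2_oo [b tb]] : exists2 f2 : nat -> nat, f2 @ \oo --> \oo &
    exists b : 'rV[R]_q, (fun j => (t (f1 j)).1.2) \o f2 @ \oo --> b.
  by apply: (@bounded_subseq_cvg _ _ _ B); apply: nearW => j; case: (K_bounded _ _ _ (K_t (f1 j))).
have [f3 f3_oo [c tc]] : exists2 f3 : nat -> nat, f3 @ \oo --> \oo &
    exists c : 'rV[R]_r, (fun j => (t (f1 (f2 j))).2) \o f3 @ \oo --> c.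
  apply: (@bounded_subseq_cvg _ _ _ B); apply: nearW => j.
  by case: (K_bounded _ _ _ (K_t (f1 (f2 j)))).
pose g j := f1 (f2 (f3 j)).
have g_oo : g @ \oo --> \oo by apply: cvg_comp f1_oo; apply: cvg_comp f3_oo f2_oo.
have [Kabc Gt] := K_closed (fun j => (t (g j)).1.1) (fun j => (t (g j)).1.2) (fun j => (t (g j)).2)
  a b c (fun j => K_t (g j)) (cvg_comp _ _ (cvg_comp _ _ f3_oo f2_oo) ta)
  (cvg_comp _ _ f3_oo tb) tc.
exists a, b, c; split => // a' b' c' Kabc'.
have : G a b c <= inf S.
  have gS : (fun j => G (t (g j)).1.1 (t (g j)).1.2 (t (g j)).2 - (g j).+1%:R^-1) @ \oo --> G a b c.
    by rewrite -[G a b c]subr0; apply: cvgB Gt (cvg_comp _ _ g_oo (@cvg_harmonic R)).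
  apply: (closed_cvg [set x | x <= inf S] (@closed_le _ _) _ _ gS); apply: nearW => j /=.
  by rewrite lerBlDr; apply: ltW; exact: (t_spec (g j)).2.
by move/le_trans; apply; apply: ge_inf; [case: S_inf | exists a', b', c'].
Unshelve. all: by end_near.
Qed.

Section first_order_conditions.
Variables (R : realType) (n m : nat).

Lemma reg_subdiff_of_local_min (phi : 'rV[R]_n -> R) (xbar x z : 'rV[R]_n) (c r : R) :
  0 < c -> 0 < r ->
  (forall z', enorm (z' - z) < r ->
     phi z + c * edot (x - z) (x - z) + edot (z - xbar) (z - xbar)
     <= phi z' + c * edot (x - z') (x - z') + edot (z' - xbar) (z' - xbar)) ->
  reg_subdiff phi z ((2 * c) *: (x - z) - 2 *: (z - xbar)).
Proof.
move=> c_gt0 r_gt0 z_min e e_gt0.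
have ec_gt0 : 0 < e / (c + 1) by rewrite divr_gt0 // ltr_wpDl // ltW.
exists (Order.min r (e / (c + 1))); first by rewrite lt_min r_gt0.
move=> z'; rewrite lt_min => /andP[/z_min + h_le].
rewrite -[x - z'](subrKA z) -[z' - xbar](subrKA z) (addrC (z' - z)) -(opprB z' z).
set h := z' - z; rewrite (edot_sqrB (x - z) h) (edot_sqrD (z - xbar) h).
rewrite (edotBl ((2 * c) *: _)) !edotZl -(enorm_sqr h).
have h_ge0 := enorm_ge0 h.
have : (c + 1) * enorm h ^+ 2 <= e * enorm h.
  by rewrite expr2 mulrA ler_wpM2r // mulrC -ler_pdivlMr ?ltW // ltr_wpDl // ltW.
set A := edot (x - z) h; set B := edot (z - xbar) h; set t := enorm h ^+ 2.
nra.
Qed.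

Lemma reg_normal_of_local_min (Phi : 'rV[R]_n -> 'rV[R]_m -> Prop) (x' x : 'rV[R]_n)
    (ybar y : 'rV[R]_m) (c r : R) :
  0 < c -> 0 < r -> Phi x y ->
  (forall a b, Phi a b -> pnorm (a - x) (b - y) < r ->
     c * edot (x - x') (x - x') + c * edot (y - ybar) (y - ybar)
     <= c * edot (a - x') (a - x') + c * edot (b - ybar) (b - ybar)) ->
  reg_normal_gph Phi x y (- ((2 * c) *: (x - x'))) (- ((2 * c) *: (y - ybar))).
Proof.
move=> c_gt0 r_gt0 Phi_xy xy_min; split => // e e_gt0.
exists (Order.min r (e / c)); first by rewrite lt_min r_gt0 divr_gt0.
move=> a b Phi_ab; rewrite lt_min => /andP[/(xy_min a b Phi_ab) + p_le].
rewrite -[a - x'](subrKA x) -[b - ybar](subrKA y) (addrC (a - x)) (addrC (b - y)).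
rewrite (edot_sqrD (x - x') (a - x)) (edot_sqrD (y - ybar) (b - y)).
rewrite (edotNl ((2 * c) *: (x - x'))) (edotNl ((2 * c) *: (y - ybar))) !edotZl.
have := pnorm_sqr (a - x) (b - y); have := pnorm_ge0 (a - x) (b - y).
set p := pnorm _ _ => p_ge0 p_sqr.
have : c * p ^+ 2 <= e * p.
  by rewrite expr2 mulrA ler_wpM2r // mulrC -ler_pdivlMr ?ltW.
rewrite p_sqr; nra.
Qed.

End first_order_conditions.

Lemma cvg_shift (T : ptopologicalType) (u : nat -> T) (l : set_system T) N :
  u @ \oo --> l -> (fun k => u (k + N)%N) @ \oo --> l.
Proof. by rewrite cvg_shiftn. Qed.

Section eventual_sequences.
Variables (R : realType) (n m : nat).
Implicit Types (Phi : 'rV[R]_n -> 'rV[R]_m -> Prop) (xbar : 'rV[R]_n) (ybar : 'rV[R]_m).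

Lemma lim_subdiff_near (phi : 'rV[R]_n -> R) x v (xk vk : nat -> 'rV[R]_n) :
  xk @ \oo --> x -> (fun k => phi (xk k)) @ \oo --> phi x -> vk @ \oo --> v ->
  (\forall k \near \oo, reg_subdiff phi (xk k) (vk k)) -> lim_subdiff phi x v.
Proof.
move=> xk_x phi_xk vk_v [N _ reg_N].
exists (fun k => xk (k + N)%N), (fun k => vk (k + N)%N); split.
- exact: cvg_shift xk_x.
- exact: cvg_shift phi_xk.
- exact: cvg_shift vk_v.
- by move=> k; apply: reg_N; rewrite /= leq_addl.
Qed.

Lemma lim_coderiv_near Phi xbar ybar lam xs (xk : nat -> 'rV[R]_n) (yk : nat -> 'rV[R]_m)
    (xsk : nat -> 'rV[R]_n) (lk : nat -> 'rV[R]_m) :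
  xk @ \oo --> xbar -> yk @ \oo --> ybar -> xsk @ \oo --> xs -> lk @ \oo --> lam ->
  (\forall k \near \oo, reg_coderiv Phi (xk k) (yk k) (lk k) (xsk k)) ->
  lim_coderiv Phi xbar ybar lam xs.
Proof.
move=> xk_x yk_y xsk_xs /cvgN lk_lam [N _ reg_N].
exists (fun k => xk (k + N)%N), (fun k => yk (k + N)%N), (fun k => xsk (k + N)%N),
  (fun k => - lk (k + N)%N); split; [exact: cvg_shift xk_x | exact: cvg_shift yk_y |
  exact: cvg_shift xsk_xs | exact: cvg_shift lk_lam |].
by move=> k; apply: reg_N; rewrite /= leq_addl.
Qed.

Lemma critical_direction_near (phi : 'rV[R]_n -> R) Phi xbar ybar (u : 'rV[R]_n)
    (uk : nat -> 'rV[R]_n) (ak : nat -> R) (vk : nat -> 'rV[R]_m) (tk : nat -> R) :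
  uk @ \oo --> u -> ak @ \oo --> 0 -> vk @ \oo --> (0 : 'rV[R]_m) -> tk @ \oo --> 0 ->
  (\forall k \near \oo, [/\ 0 < tk k,
     phi (xbar + tk k *: uk k) <= phi xbar + tk k * enorm (uk k) * ak k &
     Phi (xbar + tk k *: uk k) (ybar + (tk k * enorm (uk k)) *: vk k)]) ->
  critical_direction phi Phi xbar ybar u.
Proof.
move=> uk_u ak_0 vk_0 tk_0 [N _ crit_N].
exists (fun k => uk (k + N)%N), (fun k => ak (k + N)%N), (fun k => vk (k + N)%N),
  (fun k => tk (k + N)%N).
have {}crit_N k : [/\ _, _ & _] := crit_N (k + N)%N (leq_addl _ _).
split; last by split=> k; case: (crit_N k).
split; [exact: cvg_shift uk_u | exact: cvg_shift ak_0 | exact: cvg_shift vk_0 |].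
by split; [exact: cvg_shift tk_0 | move=> k; case: (crit_N k)].
Qed.

Lemma asymp_regular_near Phi xbar ybar (u : 'rV[R]_n) (xk : nat -> 'rV[R]_n) (yk : nat -> 'rV[R]_m)
    (xsk : nat -> 'rV[R]_n) (lk : nat -> 'rV[R]_m) (xs : 'rV[R]_n) (ys : 'rV[R]_m) :
  asymp_regular Phi xbar ybar u ->
  (\forall k \near \oo, [/\ Phi (xk k) (yk k), ~ Phi (xk k) ybar, yk k <> ybar &
     reg_coderiv Phi (xk k) (yk k) (lk k) (xsk k)]) ->
  xk @ \oo --> xbar -> yk @ \oo --> ybar -> xsk @ \oo --> xs ->
  (fun k => (enorm (xk k - xbar))^-1 *: (xk k - xbar)) @ \oo --> u ->
  (fun k => (enorm (xk k - xbar))^-1 *: (yk k - ybar)) @ \oo --> (0 : 'rV[R]_m) ->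
  (fun k => (enorm (yk k - ybar) / enorm (xk k - xbar)) *: lk k) @ \oo --> ys ->
  (fun k => enorm (lk k)) @ \oo --> +oo ->
  (fun k => (enorm (yk k - ybar))^-1 *: (yk k - ybar) - (enorm (lk k))^-1 *: lk k)
    @ \oo --> (0 : 'rV[R]_m) ->
  exists lam, lim_coderiv Phi xbar ybar lam xs.
Proof.
move=> reg [N _ hyp_N] h1 h2 h3 h4 h5 h6 h7 h8.
have {}hyp_N k : [/\ _, _, _ & _] := hyp_N (k + N)%N (leq_addl _ _).
apply: (reg (fun k => xk (k + N)%N) (fun k => yk (k + N)%N) (fun k => xsk (k + N)%N)
  (fun k => lk (k + N)%N) xs ys); try by move=> k; case: (hyp_N k).
- exact: cvg_shift h1.
- exact: cvg_shift h2.
- exact: cvg_shift h3.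
- exact: cvg_shift h4.
- exact: cvg_shift h5.
- exact: cvg_shift h6.
- exact: cvg_shift h7.
- exact: cvg_shift h8.
Qed.

End eventual_sequences.

Section penalty_scheme.
Variables (R : realType) (n m : nat) (phi : 'rV[R]_n -> R)
  (Phi : 'rV[R]_n -> 'rV[R]_m -> Prop) (xbar : 'rV[R]_n) (ybar : 'rV[R]_m) (L eps : R).
Hypotheses (Phi_closed : closed_graph Phi) (Phi_bar : Phi xbar ybar)
  (L_gt0 : 0 < L) (eps_gt0 : 0 < eps).
Hypothesis phi_lip : forall x x', enorm (x - xbar) <= eps -> enorm (x' - xbar) <= eps ->
  `|phi x - phi x'| <= L * enorm (x - x').
Hypothesis xbar_min : forall x, Phi x ybar -> enorm (x - xbar) <= eps -> phi xbar <= phi x.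

Let phi_lipB x x' : enorm (x - xbar) <= eps -> enorm (x' - xbar) <= eps ->
  phi x - phi x' <= L * enorm (x - x').
Proof. by move=> x_eps x'_eps; exact/(le_trans (ler_norm _))/phi_lip. Qed.

Local Notation c k := (k.+1%:R : R).

Let c_gt0 k : 0 < c k. Proof. by rewrite ltr0Sn. Qed.

Definition admissible a z y :=
  [/\ Phi a y, enorm (a - xbar) <= eps, enorm (z - xbar) <= eps & enorm (y - ybar) <= eps].

Definition penalty k a z y := phi z + c k * edot (a - z) (a - z)
  + c k * edot (y - ybar) (y - ybar) + edot (z - xbar) (z - xbar).

Let admissible_bar : admissible xbar xbar ybar.
Proof. by split; rewrite // subrr enorm0 ltW. Qed.

Lemma phi_cvg (z : nat -> 'rV[R]_n) x :
  (forall j, enorm (z j - xbar) <= eps) -> enorm (x - xbar) <= eps ->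
  z @ \oo --> x -> (fun j => phi (z j)) @ \oo --> phi x.
Proof.
move=> z_eps x_eps zx; apply/cvgrPdist_le => e e_gt0.
move/cvg_enormP/cvgrPdist_le : zx => /(_ (e / L) (divr_gt0 e_gt0 L_gt0)).
apply: filterS => j; rewrite sub0r normrN ger0_norm ?enorm_ge0 // => zj_x.
by rewrite (le_trans (phi_lip _ _)) // enormBC mulrC -ler_pdivlMr.
Qed.

Lemma penalty_cvg k (za zb : nat -> 'rV[R]_n) (zc : nat -> 'rV[R]_m) a b y :
  (forall j, admissible (za j) (zb j) (zc j)) -> enorm (b - xbar) <= eps ->
  za @ \oo --> a -> zb @ \oo --> b -> zc @ \oo --> y ->
  (fun j => penalty k (za j) (zb j) (zc j)) @ \oo --> penalty k a b y.
Proof.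
move=> adm b_eps za_a zb_b zc_y.
have phib := phi_cvg (fun j => let: And4 _ _ zb_eps _ := adm j in zb_eps) b_eps zb_b.
apply: cvgD; last exact: cvg_edot_sqr (cvgB zb_b (cvg_cst _)).
apply: cvgD; last exact: cvgM (cvg_cst _) (cvg_edot_sqr (cvgB zc_y (cvg_cst _))).
exact: cvgD phib (cvgM (cvg_cst _) (cvg_edot_sqr (cvgB za_a zb_b))).
Qed.

Lemma penalty_minimizer k : exists t : 'rV[R]_n * 'rV[R]_n * 'rV[R]_m,
  admissible t.1.1 t.1.2 t.2 /\
  forall a z y, admissible a z y -> penalty k t.1.1 t.1.2 t.2 <= penalty k a z y.
Proof.
have [|||a [z [y min_azy]]] := @exists_minimizer _ _ _ _ admissible (penalty k)
  (enorm xbar + enorm ybar + eps) (phi xbar - L * eps) _ _ _ admissible_bar.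
- move=> a z y [_ a_eps z_eps y_eps]; have := enorm_ge0 xbar; have := enorm_ge0 ybar.
  have := enorm_distD a xbar 0; have := enorm_distD z xbar 0; have := enorm_distD y ybar 0.
  by rewrite !subr0; split; lra.
- move=> a z y [_ _ z_eps _]; have := phi_lipB (x := xbar) (x' := z).
  rewrite subrr enorm0 (enormBC xbar) => /(_ (ltW eps_gt0) z_eps).
  have := mulr_ge0 (ltW (c_gt0 k)) (edot_ge0 (a - z)).
  have := mulr_ge0 (ltW (c_gt0 k)) (edot_ge0 (y - ybar)); have := edot_ge0 (z - xbar).
  have : L * enorm (z - xbar) <= L * eps by rewrite ler_wpM2l // ltW.
  rewrite /penalty; lra.
- move=> za zb zc a z y adm za_a zb_z zc_y.
  have z_eps : enorm (z - xbar) <= eps.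
    by apply: (cvg_enorm_bound _ zb_z); apply: nearW => j; case: (adm j).
  split; last exact: penalty_cvg.
  split => //; first by apply: (closed_graph_cvg Phi_closed _ za_a zc_y) => j; case: (adm j).
    by apply: (cvg_enorm_bound _ za_a); apply: nearW => j; case: (adm j).
  by apply: (cvg_enorm_bound _ zc_y); apply: nearW => j; case: (adm j).
- by exists (a, z, y).
Qed.

Definition pmin k := sval (cid (penalty_minimizer k)).
Definition xk k := (pmin k).1.1.
Definition zk k := (pmin k).1.2.
Definition yk k := (pmin k).2.

Lemma admissible_pmin k : admissible (xk k) (zk k) (yk k).
Proof. by case: (svalP (cid (penalty_minimizer k))). Qed.

Lemma penalty_pmin_le k a z y : admissible a z y ->
  penalty k (xk k) (zk k) (yk k) <= penalty k a z y.
Proof. by case: (svalP (cid (penalty_minimizer k))) => _; exact. Qed.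

Local Notation dk k := (enorm (xk k - zk k)).
Local Notation ak k := (enorm (zk k - xbar)).
Local Notation tk k := (enorm (xk k - xbar)).
Local Notation bk k := (enorm (yk k - ybar)).
Local Notation C := (L + 2 * eps).

Let C_gt0 : 0 < C. Proof. by rewrite addr_gt0 ?mulr_gt0. Qed.

Let ak_le k : ak k <= eps. Proof. by case: (admissible_pmin k). Qed.
Let tk_le k : tk k <= eps. Proof. by case: (admissible_pmin k). Qed.

Lemma penalty_pmin_bar k :
  phi (zk k) + c k * dk k ^+ 2 + c k * bk k ^+ 2 + ak k ^+ 2 <= phi xbar.
Proof.
rewrite !enorm_sqr; apply: le_trans (penalty_pmin_le k admissible_bar) _.
by rewrite /penalty !subrr !edot0l !mulr0 !addr0.
Qed.

Lemma phi_zk_le k : phi (zk k) <= phi xbar.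
Proof.
have := penalty_pmin_bar k; have := sqr_ge0 (ak k).
have := mulr_ge0 (ltW (c_gt0 k)) (sqr_ge0 (dk k)).
have := mulr_ge0 (ltW (c_gt0 k)) (sqr_ge0 (bk k)); lra.
Qed.

Lemma c_b_sqr_le k : c k * bk k ^+ 2 <= L * ak k.
Proof.
have := phi_lipB (x := xbar) (x' := zk k); rewrite subrr enorm0 (enormBC xbar).
move=> /(_ (ltW eps_gt0) (ak_le k)) phi_le; have := penalty_pmin_bar k.
have := mulr_ge0 (ltW (c_gt0 k)) (sqr_ge0 (dk k)); have := sqr_ge0 (ak k); lra.
Qed.

Lemma c_d_le k : c k * dk k <= C.
Proof.
have adm_xx : admissible (xk k) (xk k) (yk k) by case: (admissible_pmin k).
have := penalty_pmin_le k adm_xx; rewrite /penalty subrr edot0l mulr0 addr0 -!enorm_sqr.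
have phi_le : phi (xk k) - phi (zk k) <= L * dk k by apply: phi_lipB; [exact: tk_le|exact: ak_le].
have ta_le : tk k - ak k <= dk k.
  have := ler_enorm_dist (xk k - xbar) (zk k - xbar).
  by rewrite opprB addrA subrK => /(le_trans (ler_norm _)).
have tak_le : tk k ^+ 2 - ak k ^+ 2 <= dk k * (2 * eps).
  rewrite subr_sqr; apply: le_trans (_ : dk k * (tk k + ak k) <= _).
    by apply: ler_wpM2r; rewrite ?addr_ge0 ?enorm_ge0.
  by rewrite ler_wpM2l ?enorm_ge0 //; have := ak_le k; have := tk_le k; lra.
move=> pen_le; have d_ge0 : 0 <= dk k := enorm_ge0 _.
have cd_le : c k * dk k ^+ 2 <= C * dk k by lra.
have [d0|dN0] := eqVneq (dk k) 0; first by rewrite d0 mulr0 (ltW C_gt0).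
by move: cd_le; rewrite expr2 mulrA ler_pM2r // lt_neqAle eq_sym dN0.
Qed.

Definition xi k := (2 * c k) *: (xk k - zk k) - 2 *: (zk k - xbar).
Definition lam k := (2 * c k) *: (yk k - ybar).
Definition xs k := - ((2 * c k) *: (xk k - zk k)).

Lemma xsE k : xs k = - xi k - 2 *: (zk k - xbar).
Proof. by rewrite /xs /xi opprD opprK addrK. Qed.

Lemma enorm_xi_le k : enorm (xi k) <= 2 * C + 2 * eps.
Proof.
rewrite (le_trans (enormD _ _)) // enormN !enormZ !ger0_norm ?mulr_ge0 ?(ltW (c_gt0 k)) //.
by have := c_d_le k; have := ak_le k; lra.
Qed.

Lemma enorm_lam k : enorm (lam k) = 2 * c k * bk k.
Proof. by rewrite enormZ ger0_norm // mulr_ge0. Qed.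

Lemma ak_le_tk_dk k : ak k <= tk k + dk k.
Proof. by have := enorm_distD (zk k) (xk k) xbar; rewrite (enormBC (zk k) (xk k)); lra. Qed.

Lemma lam_sqr_le k : enorm (lam k) ^+ 2 <= 4 * L * (c k * tk k + C).
Proof.
have cd_le := c_d_le k; have cb_le := c_b_sqr_le k; have a_le := ak_le_tk_dk k.
rewrite enorm_lam; have -> : (2 * c k * bk k) ^+ 2 = 4 * c k * (c k * bk k ^+ 2) by ring.
apply: le_trans (_ : 4 * c k * (L * (tk k + dk k)) <= _).
  apply: ler_wpM2l; first by rewrite mulr_ge0.
  by apply: le_trans cb_le _; apply: ler_wpM2l; first exact: ltW.
have -> : 4 * c k * (L * (tk k + dk k)) = 4 * L * (c k * tk k + c k * dk k) by ring.
by apply: ler_wpM2l; [rewrite mulr_ge0 // ltW | rewrite lerD2l].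
Qed.

Lemma reg_subdiff_pmin k : ak k < eps / 2 -> reg_subdiff phi (zk k) (xi k).
Proof.
move=> a_lt; apply: (reg_subdiff_of_local_min (c_gt0 k) (_ : 0 < eps / 2)) => [|z z_lt].
  by rewrite divr_gt0.
have [Phi_k x_eps _ y_eps] := admissible_pmin k.
have z_eps : enorm (z - xbar) <= eps.
  by have := enorm_distD z (zk k) xbar; lra.
by have := penalty_pmin_le k (And4 Phi_k x_eps z_eps y_eps); rewrite /penalty; lra.
Qed.

Lemma reg_coderiv_pmin k : tk k < eps / 2 -> bk k < eps / 2 ->
  reg_coderiv Phi (xk k) (yk k) (lam k) (xs k).
Proof.
move=> t_lt b_lt; have [Phi_k _ z_eps _] := admissible_pmin k.
apply: (reg_normal_of_local_min (c_gt0 k) (_ : 0 < eps / 2) Phi_k) => [|x y Phi_xy p_lt].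
  by rewrite divr_gt0.
have x_eps : enorm (x - xbar) <= eps.
  by have := enorm_distD x (xk k) xbar; have := enorm_le_pnorml (x - xk k) (y - yk k); lra.
have y_eps : enorm (y - ybar) <= eps.
  by have := enorm_distD y (yk k) ybar; have := enorm_le_pnormr (x - xk k) (y - yk k); lra.
by have := penalty_pmin_le k (And4 Phi_xy x_eps z_eps y_eps); rewrite /penalty; lra.
Qed.

Lemma not_Phi_pmin k : 0 < bk k -> ~ Phi (xk k) ybar.
Proof.
move=> b_gt0 Phi_k; have [_ x_eps z_eps _] := admissible_pmin k.
have := penalty_pmin_le k (And4 Phi_k x_eps z_eps (_ : enorm (ybar - ybar) <= eps)).
rewrite subrr enorm0 ltW // /penalty subrr edot0l mulr0 addr0 -(enorm_sqr (yk k - ybar)).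
move=> /(_ isT).
by have := mulr_gt0 (c_gt0 k) (exprn_gt0 2 b_gt0); lra.
Qed.

Lemma dk_cvg0 : (fun k => dk k) @ \oo --> 0.
Proof.
have C_inv : (fun k => C * (c k)^-1) @ \oo --> 0.
  by rewrite -(mulr0 C); exact: cvgM (cvg_cst _) (@cvg_harmonic R).
apply: (squeeze_cvgr _ (cvg_cst 0) C_inv); apply: nearW => k.
by rewrite enorm_ge0 /= ler_pdivlMr // mulrC c_d_le.
Qed.

Lemma yk_cvg : yk @ \oo --> ybar.
Proof.
apply/cvg_enormP; apply: (cvg0_sqr_le (g := fun k => L * eps * (c k)^-1)).
  by rewrite -(mulr0 (L * eps)); exact: cvgM (cvg_cst _) (@cvg_harmonic R).
apply: nearW => k; rewrite enorm_ge0 ler_pdivlMr // mulrC; split => //.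
by apply: le_trans (c_b_sqr_le k) _; apply: ler_wpM2l; [exact: ltW | exact: ak_le].
Qed.

Lemma pmin_subseq_cvg (s : nat -> nat) (xt : 'rV[R]_n) : s @ \oo --> \oo -> xk \o s @ \oo --> xt ->
  zk \o s @ \oo --> xbar /\ xk \o s @ \oo --> xbar.
Proof.
move=> s_oo xk_xt; have ds0 := cvg_comp _ _ s_oo dk_cvg0.
have zs_xt : zk \o s @ \oo --> xt.
  apply: (cvg_enorm_le (g := fun j => enorm (xk (s j) - xt) + dk (s j))).
    by rewrite -(addr0 0); exact: cvgD ((cvg_enormP _ _).1 xk_xt) ds0.
  apply: nearW => j /=; have := enorm_distD (zk (s j)) (xk (s j)) xt.
  by rewrite (enormBC (zk (s j)) (xk (s j))); lra.
have Phi_xt : Phi xt ybar.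
  apply: (closed_graph_cvg Phi_closed _ xk_xt (cvg_comp _ _ s_oo yk_cvg)) => j.
  by case: (admissible_pmin (s j)).
have xt_eps : enorm (xt - xbar) <= eps.
  by apply: (cvg_enorm_bound _ xk_xt); apply: nearW => j; exact: tk_le.
have phi_xt := xbar_min Phi_xt xt_eps.
(* |zk - xbar|^2 <= phi xbar - phi zk <= phi xt - phi zk, and the latter tends to 0 *)
have zs_xbar : zk \o s @ \oo --> xbar.
  apply/cvg_enormP; apply: (cvg0_sqr_le (g := fun j => L * enorm (zk (s j) - xt))).
    by rewrite -(mulr0 L); exact: cvgM (cvg_cst _) ((cvg_enormP _ _).1 zs_xt).
  apply: nearW => j /=; rewrite enorm_ge0; split => //.
  have := phi_lipB xt_eps (ak_le (s j)); rewrite (enormBC xt).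
  have := penalty_pmin_bar (s j); have := mulr_ge0 (ltW (c_gt0 (s j))) (sqr_ge0 (dk (s j))).
  by have := mulr_ge0 (ltW (c_gt0 (s j))) (sqr_ge0 (bk (s j))); lra.
split => //; apply: (cvg_enorm_le (g := fun j => dk (s j) + ak (s j))).
  by rewrite -(addr0 0); exact: cvgD ds0 ((cvg_enormP _ _).1 zs_xbar).
by apply: nearW => j; exact: enorm_distD.
Qed.

Lemma lim_subdiff_pmin (s : nat -> nat) (xi0 : 'rV[R]_n) :
  zk \o s @ \oo --> xbar -> xi \o s @ \oo --> xi0 -> lim_subdiff phi xbar xi0.
Proof.
move=> zs xis; apply: (lim_subdiff_near zs _ xis).
  by apply: (phi_cvg (fun j => ak_le (s j))) zs; rewrite subrr enorm0 ltW.
apply: filterS (cvg_enorm_lt zs (_ : 0 < eps / 2)); last by rewrite divr_gt0.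
by move=> j; exact: reg_subdiff_pmin.
Qed.

Lemma near_reg_coderiv_pmin (s : nat -> nat) : s @ \oo --> \oo -> xk \o s @ \oo --> xbar ->
  \forall j \near \oo, reg_coderiv Phi (xk (s j)) (yk (s j)) (lam (s j)) (xs (s j)).
Proof.
move=> s_oo xk_xbar; have eps2_gt0 : 0 < eps / 2 by rewrite divr_gt0.
near=> j; apply: reg_coderiv_pmin; near: j.
  exact: cvg_enorm_lt xk_xbar eps2_gt0.
exact: cvg_enorm_lt (cvg_comp _ _ s_oo yk_cvg) eps2_gt0.
Unshelve. all: by end_near.
Qed.

Lemma M_stationary_bounded (s : nat -> nat) (x0 : 'rV[R]_n) (M : R) :
  s @ \oo --> \oo -> xk \o s @ \oo --> xbar -> xs \o s @ \oo --> x0 ->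
  (forall j, enorm (lam (s j)) <= M) -> exists lam0, lim_coderiv Phi xbar ybar lam0 x0.
Proof.
move=> s_oo xk_xbar xs_x0 lam_le.
have [f f_oo [lam0 lam_f]] : exists2 f : nat -> nat, f @ \oo --> \oo &
    exists lam0 : 'rV[R]_m, lam \o s \o f @ \oo --> lam0.
  by apply: (@bounded_subseq_cvg _ _ _ M); exact: nearW.
have sf_oo : (s \o f) @ \oo --> \oo := cvg_comp _ _ f_oo s_oo.
exists lam0; apply: (lim_coderiv_near (cvg_comp _ _ f_oo xk_xbar) (cvg_comp _ _ sf_oo yk_cvg)
  (cvg_comp _ _ f_oo xs_x0) lam_f).
exact: (near_reg_coderiv_pmin sf_oo (cvg_comp _ _ f_oo xk_xbar)).
Qed.

Lemma ctk_cvgy (s : nat -> nat) : (fun j => enorm (lam (s j))) @ \oo --> +oo ->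
  (fun j => c (s j) * tk (s j)) @ \oo --> +oo.
Proof.
move=> lam_oo; have /cvgryPgt lam2 := cvg_comp _ _ lam_oo cvgr_expr2.
apply/cvgryPgt => A.
apply: filterS (lam2 (4 * L * (A + C))) => j /= /lt_le_trans/(_ (lam_sqr_le (s j))).
by rewrite ltr_pM2l ?mulr_gt0 // ltrD2r.
Qed.

Lemma near_unbounded (s : nat -> nat) : (fun j => enorm (lam (s j))) @ \oo --> +oo ->
  \forall j \near \oo, [/\ 1 < c (s j) * tk (s j), 0 < tk (s j) & 0 < bk (s j)].
Proof.
move=> lam_oo; have /cvgryPgt ct_oo := ctk_cvgy lam_oo.
near=> j; have ct_gt1 : 1 < c (s j) * tk (s j) by near: j; exact: ct_oo.
split => //; first by rewrite -(pmulr_rgt0 _ (c_gt0 (s j))) (lt_trans ltr01).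
have : 0 < enorm (lam (s j)) by near: j; move/cvgryPgt : lam_oo; exact.
by rewrite enorm_lam !pmulr_rgt0 // ltr0n.
Unshelve. all: by end_near.
Qed.

Definition dirx k := (tk k)^-1 *: (xk k - xbar).
Definition diry k := (tk k)^-1 *: (yk k - ybar).
Definition lam_scaled k := (bk k / tk k) *: lam k.

Lemma xbar_dirx k : 0 < tk k -> xbar + tk k *: dirx k = xk k.
Proof. by move=> t_gt0; rewrite scalerA mulfV ?gt_eqF // scale1r addrC subrK. Qed.

Lemma enorm_dirx k : 0 < tk k -> enorm (dirx k) = 1.
Proof. by move=> t_gt0; rewrite enormZ ger0_norm ?invr_ge0 ?(ltW t_gt0) // mulVf ?gt_eqF. Qed.

Lemma ybar_diry k : 0 < tk k -> ybar + (tk k * enorm (dirx k)) *: diry k = yk k.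
Proof.
by move=> t_gt0; rewrite enorm_dirx // mulr1 scalerA mulfV ?gt_eqF // scale1r addrC subrK.
Qed.

Lemma phi_xk_le k : phi (xk k) <= phi xbar + L * C / c k.
Proof.
have := phi_lipB (tk_le k) (ak_le k); have := phi_zk_le k.
have : L * dk k <= L * C / c k.
  rewrite -mulrA; apply: ler_wpM2l; first exact: ltW.
  by rewrite ler_pdivlMr // (mulrC (enorm _)) c_d_le.
set q := L * C / _; lra.
Qed.

Lemma enorm_lam_scaled_le k : 0 < tk k -> 1 <= c k * tk k ->
  enorm (lam_scaled k) <= 2 * L * (1 + C).
Proof.
move=> t_gt0 ct_ge1; rewrite enormZ enorm_lam ger0_norm ?divr_ge0 ?enorm_ge0 //.
rewrite mulrAC ler_pdivrMr // (_ : bk k * (2 * c k * bk k) = 2 * (c k * bk k ^+ 2)); last by ring.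
have d_le : dk k <= C * tk k.
  rewrite -(ler_pM2l (c_gt0 k)) mulrCA; apply: le_trans (c_d_le k) _.
  by rewrite ler_peMr // (ltW C_gt0).
have := c_b_sqr_le k; have := ler_wpM2l (ltW L_gt0) (ak_le_tk_dk k).
have := ler_wpM2l (ltW L_gt0) d_le; set cb := _ * bk k ^+ 2; lra.
Qed.

Lemma enorm_diry_sqr_le k : 0 < tk k ->
  enorm (diry k) ^+ 2 <= L * (c k * tk k)^-1 + L * C * (c k * tk k)^-1 ^+ 2.
Proof.
move=> t_gt0; have ct_gt0 : 0 < c k * tk k by rewrite mulr_gt0.
rewrite enormZ ger0_norm ?invr_ge0 ?(ltW t_gt0) //.
have cN0 : c k != 0 by rewrite gt_eqF.
have -> : (tk k)^-1 * bk k = c k * bk k * (c k * tk k)^-1.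
  by field; rewrite nat1r cN0 gt_eqF.
rewrite exprMn (_ : L * _ + _ = L * (c k * tk k + C) * (c k * tk k)^-1 ^+ 2); last first.
  by field; rewrite nat1r cN0 gt_eqF.
apply: ler_wpM2r; first exact: sqr_ge0.
have := lam_sqr_le k; rewrite enorm_lam (_ : (2 * c k * bk k) ^+ 2 = 4 * (c k * bk k) ^+ 2).
  by rewrite -mulrA ler_pM2l.
by ring.
Qed.

Lemma ctk_inv_cvg0 (r : nat -> nat) : (fun j => c (r j) * tk (r j)) @ \oo --> +oo ->
  (fun j => (c (r j) * tk (r j))^-1) @ \oo --> 0.
Proof.
move=> ct_oo; apply/gtr0_cvgV0 => //.
by move/cvgryPgt : ct_oo => /(_ 0).
Qed.

Lemma diry_cvg0 (r : nat -> nat) : (fun j => c (r j) * tk (r j)) @ \oo --> +oo ->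
  diry \o r @ \oo --> (0 : 'rV[R]_m).
Proof.
move=> ct_oo; have ct_inv := ctk_inv_cvg0 ct_oo.
pose inv j := (c (r j) * tk (r j))^-1.
have : (fun j => L * inv j + L * C * (inv j * inv j)) @ \oo --> L * 0 + L * C * (0 * 0).
  exact: cvgD (cvgM (cvg_cst _) ct_inv) (cvgM (cvg_cst _) (cvgM ct_inv ct_inv)).
rewrite !mulr0 addr0 => g0; apply/cvg_enormP; apply: (cvg0_sqr_le g0).
move/cvgryPgt : ct_oo => /(_ 0); apply: filterS => j ct_gt0 /=.
rewrite subr0 enorm_ge0 -expr2 enorm_diry_sqr_le //.
by rewrite -(pmulr_rgt0 _ (c_gt0 (r j))).
Qed.

Lemma critical_direction_pmin (r : nat -> nat) (u : 'rV[R]_n) :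
  xk \o r @ \oo --> xbar -> (fun j => c (r j) * tk (r j)) @ \oo --> +oo ->
  dirx \o r @ \oo --> u -> critical_direction phi Phi xbar ybar u.
Proof.
move=> xr_xbar ct_oo dirx_u.
apply: (critical_direction_near (ak := fun j => L * C * (c (r j) * tk (r j))^-1)
  dirx_u _ (diry_cvg0 ct_oo) ((cvg_enormP _ _).1 xr_xbar)).
  by rewrite -(mulr0 (L * C)); exact: cvgM (cvg_cst _) (ctk_inv_cvg0 ct_oo).
move/cvgryPgt : ct_oo => /(_ 0); apply: filterS => j ct_gt0.
have t_gt0 : 0 < tk (r j) by rewrite -(pmulr_rgt0 _ (c_gt0 (r j))).
rewrite /= ybar_diry // enorm_dirx // xbar_dirx //.
split => //; last by case: (admissible_pmin (r j)).
have -> : tk (r j) * 1 * (L * C * (c (r j) * tk (r j))^-1) = L * C / c (r j).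
  by field; rewrite nat1r !gt_eqF.
exact: phi_xk_le.
Qed.

Lemma lam_direction k : 0 < bk k ->
  (bk k)^-1 *: (yk k - ybar) - (enorm (lam k))^-1 *: lam k = 0.
Proof.
move=> b_gt0; rewrite enorm_lam /lam scalerA.
suff -> : (2 * c k * bk k)^-1 * (2 * c k) = (bk k)^-1 by rewrite subrr.
by field; rewrite nat1r !gt_eqF.
Qed.

Lemma M_stationary_unbounded (s : nat -> nat) (x0 : 'rV[R]_n) :
  (forall u, enorm u = 1 -> critical_direction phi Phi xbar ybar u ->
     asymp_regular Phi xbar ybar u) ->
  s @ \oo --> \oo -> xk \o s @ \oo --> xbar -> xs \o s @ \oo --> x0 ->
  (fun j => enorm (lam (s j))) @ \oo --> +oo ->
  exists lam0, lim_coderiv Phi xbar ybar lam0 x0.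
Proof.
move=> reg s_oo xk_xbar xs_x0 lam_oo; have ev := near_unbounded lam_oo.
have [f f_oo [u dirx_u]] : exists2 f : nat -> nat, f @ \oo --> \oo &
    exists u : 'rV[R]_n, dirx \o s \o f @ \oo --> u.
  apply: (@bounded_subseq_cvg _ _ _ 1); apply: filterS ev => j [_ t_gt0 _].
  by rewrite /= enorm_dirx.
have ev_f := near_comp f_oo ev.
have [g g_oo [w lam_w]] : exists2 g : nat -> nat, g @ \oo --> \oo &
    exists w : 'rV[R]_m, lam_scaled \o (s \o f) \o g @ \oo --> w.
  apply: (@bounded_subseq_cvg _ _ _ (2 * L * (1 + C))); apply: filterS ev_f => j [ct_gt1 t_gt0 _].
  exact: enorm_lam_scaled_le (ltW ct_gt1).
pose r := s \o f \o g.
have fg_oo : (f \o g) @ \oo --> \oo := cvg_comp _ _ g_oo f_oo.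
have r_oo : r @ \oo --> \oo := cvg_comp _ _ fg_oo s_oo.
have ev_r := near_comp fg_oo ev.
have xr : xk \o r @ \oo --> xbar := cvg_comp _ _ fg_oo xk_xbar.
have ct_oo := cvg_comp _ _ fg_oo (ctk_cvgy lam_oo).
have dirx_ur : dirx \o r @ \oo --> u := cvg_comp _ _ g_oo dirx_u.
have u1 : enorm u = 1.
  by apply: (cvg_enorm_near_eq _ dirx_u); apply: filterS ev_f => j [_ t_gt0 _]; exact: enorm_dirx.
apply: (asymp_regular_near (reg u u1 (critical_direction_pmin xr ct_oo dirx_ur)) _ xr
  (cvg_comp _ _ r_oo yk_cvg) (cvg_comp _ _ fg_oo xs_x0) dirx_ur (diry_cvg0 ct_oo) lam_w
  (cvg_comp _ _ fg_oo lam_oo)).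
- near=> j; have [_ _ b_gt0] : [/\ 1 < c (r j) * tk (r j), 0 < tk (r j) & 0 < bk (r j)].
    by near: j; exact: ev_r.
  split; [by case: (admissible_pmin (r j)) | exact: not_Phi_pmin |
    by rewrite /= => y_eq; move: b_gt0; rewrite y_eq subrr enorm0 ltxx |].
  by near: j; exact: near_reg_coderiv_pmin.
- apply: (cvg_enorm_le (cvg_cst 0)); apply: filterS ev_r => j [_ _ b_gt0].
  by rewrite /= lam_direction // subr0 enorm0.
Unshelve. all: by end_near.
Qed.

Theorem penalty_M_stationary :
  (forall u, enorm u = 1 -> critical_direction phi Phi xbar ybar u ->
     asymp_regular Phi xbar ybar u) ->
  exists lam0, exists2 xi0, lim_subdiff phi xbar xi0 & lim_coderiv Phi xbar ybar lam0 (- xi0).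
Proof.
move=> reg.
have [s1 s1_oo [xt x_xt]] : exists2 s1 : nat -> nat, s1 @ \oo --> \oo &
    exists xt : 'rV[R]_n, xk \o s1 @ \oo --> xt.
  apply: (@bounded_subseq_cvg _ _ _ (enorm xbar + eps)); apply: nearW => k.
  by have := enorm_distD (xk k) xbar 0; rewrite !subr0; have := tk_le k; lra.
have [s2 s2_oo [xi0 xi_xi0]] : exists2 s2 : nat -> nat, s2 @ \oo --> \oo &
    exists xi0 : 'rV[R]_n, xi \o s1 \o s2 @ \oo --> xi0.
  by apply: (@bounded_subseq_cvg _ _ _ (2 * C + 2 * eps)); apply: nearW => k; exact: enorm_xi_le.
pose s := s1 \o s2; have s_oo : s @ \oo --> \oo := cvg_comp _ _ s2_oo s1_oo.
have [zs_xbar xk_xbar] := pmin_subseq_cvg s_oo (cvg_comp _ _ s2_oo x_xt).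
have xs_lim : xs \o s @ \oo --> - xi0.
  have -> : xs \o s = (fun j => - xi (s j) - 2 *: (zk (s j) - xbar)).
    by apply/funext => j; rewrite /= xsE.
  have : (fun j => - xi (s j) - 2 *: (zk (s j) - xbar)) @ \oo --> - xi0 - 2 *: (xbar - xbar).
    apply: cvgB; first exact: cvgN.
    exact: cvgZ (cvg_cst (2 : R)) (cvgB zs_xbar (cvg_cst xbar)).
  by rewrite subrr scaler0 subr0.
suff [lam0 lim_lam0] : exists lam0, lim_coderiv Phi xbar ybar lam0 (- xi0).
  by exists lam0, xi0 => //; exact: lim_subdiff_pmin zs_xbar xi_xi0.
have [lam_oo|[f f_oo [M lam_le]]] := cvgy_or_bounded_subseq (fun j => enorm (lam (s j))).
  exact: M_stationary_unbounded reg s_oo xk_xbar xs_lim lam_oo.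
exact: M_stationary_bounded (cvg_comp _ _ f_oo s_oo) (cvg_comp _ _ f_oo xk_xbar)
  (cvg_comp _ _ f_oo xs_lim) lam_le.
Qed.

End penalty_scheme.

Theorem corollary5p5 (R : realType) (n m : nat) (phi : 'rV[R]_n -> R)
  (Phi : 'rV[R]_n -> 'rV[R]_m -> Prop) (xbar : 'rV[R]_n) (ybar : 'rV[R]_m) :
  locally_lipschitz phi ->
  closed_graph Phi ->
  (exists x, Phi x ybar) ->
  local_min_P phi Phi ybar xbar ->
  (forall u : 'rV[R]_n, enorm u = 1 -> critical_direction phi Phi xbar ybar u ->
     asymp_regular Phi xbar ybar u) ->
  exists lam : 'rV[R]_m, exists2 xi : 'rV[R]_n, lim_subdiff phi xbar xi &
    lim_coderiv Phi xbar ybar lam (- xi).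
Proof.
(* the hypothesis [exists x, Phi x ybar] is subsumed by [Phi xbar ybar] *)
move=> phi_lip Phi_closed _ [Phi_bar [del del_gt0 xbar_min]] reg.
have [L [d d_gt0 L_lip]] := phi_lip xbar.
pose eps := Order.min d del / 2.
have min_gt0 : 0 < Order.min d del by rewrite lt_min d_gt0.
have eps_gt0 : 0 < eps by rewrite divr_gt0.
have eps_lt : eps < Order.min d del by rewrite ltr_pdivrMr // ltr_pMr // ltr1n.
have [eps_lt_d eps_lt_del] : eps < d /\ eps < del.
  by split; apply: lt_le_trans eps_lt _; rewrite ge_min lexx ?orbT.
apply: (penalty_M_stationary (L := `|L| + 1) Phi_closed Phi_bar _ eps_gt0 _ _ reg).
- by rewrite ltr_pwDr.
- move=> x x' x_eps x'_eps; apply: le_trans (L_lip _ _ _ _) _; try exact: le_lt_trans eps_lt_d.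
  by rewrite ler_wpM2r ?enorm_ge0 // (le_trans (ler_norm _)) // lerDl.
- by move=> x Phi_x x_eps; apply: xbar_min Phi_x (le_lt_trans x_eps eps_lt_del).
Qed.
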